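(* Let $\mathcal{F}$ be a linear $3$-uniform family with $\Delta(\mathcal{F})=d$ and $\nu(\mathcal{F})=\nu$. Then $|\mathcal{F}|\leq \max\{2d\nu,10\nu\}$.
   Context: A family $\mathcal{F}$ is a finite collection of distinct subsets of a vertex set. It is $3$-uniform if every member has exactly $3$ elements, and linear if $|A\cap B|\leq 1$ for all distinct $A,B\in\mathcal{F}$. A matching is a collection of pairwise disjoint members; $\nu(\mathcal{F})$ is the maximum size of a matching. For a vertex $x$, $\mathcal{F}_x=\{A\in\mathcal{F}:x\in A\}$ and $\Delta(\mathcal{F})=\max_x|\mathcal{F}_x|$. *)

From mathcomp Require Import all_boot all_order.
Set Implicit Arguments. Unset Strict Implicit. Unset Printing Implicit Defensive.

Section Fam.
Variable T : finType.

Definition uniform3 (F : {set {set T}}) : bool := [forall A in F, #|A| == 3].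

Definition linear_fam (F : {set {set T}}) : bool :=
  [forall A in F, forall B in F, (A != B) ==> (#|A :&: B| <= 1)].

Definition is_matching (F M : {set {set T}}) : bool :=
  (M \subset F) && [forall A in M, forall B in M, (A != B) ==> [disjoint A & B]].

Definition nu (F : {set {set T}}) : nat :=
  \max_(M : {set {set T}} | is_matching F M) #|M|.

Definition star (F : {set {set T}}) (x : T) : {set {set T}} := [set A in F | x \in A].

Definition maxdeg (F : {set {set T}}) : nat := \max_(x : T) #|star F x|.
End Fam.

From mathcomp Require Import all_boot all_order zify.
Set Implicit Arguments. Unset Strict Implicit. Unset Printing Implicit Defensive.

(* Fix a maximum matching M and let V be the set of vertices it covers; by
   maximality every member meets V.  Each member spreads a weight of 6 evenly
   over its vertices in V, so the total weight is 6|F|, and it suffices to show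
   that the three vertices of each A in M carry weight at most max(12d, 60).
   Call a member meeting V in the single vertex x private to x.  If x != y are
   vertices of A with disjoint private members, replacing A by these two
   members enlarges M; so when y has a private member B, every private member
   of x meets B \ y in a distinct vertex (by linearity), and x has at most two.
   Hence either every vertex of A has at most two private members, or all the
   private members of A sit at a single vertex x, which has fewer than d of
   them because A is in F_x but not private.  Members meeting V in one vertex
   weigh 6 = 3 + 3, the others at most 3, and A itself only 2, which gives the
   bound in both cases. *)

Section Matchings.
Variable T : finType.
Implicit Types (F M : {set {set T}}) (A B E X : {set T}).

Lemma matchingP F M :
  reflect (M \subset F /\ {in M &, forall A B, A != B -> [disjoint A & B]})
          (is_matching F M).
Proof.
apply: (iffP andP) => [[sMF /forallP dM]|[sMF dM]]; split => //.
  move=> A B AM BM neqAB; move: (dM A); rewrite AM => /forallP/(_ B).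
  by rewrite BM neqAB.
apply/forallP => A; apply/implyP => AM; apply/forallP => B; apply/implyP => BM.
exact/implyP/dM.
Qed.

Lemma matching_subset F M M' :
  M' \subset M -> is_matching F M -> is_matching F M'.
Proof.
move=> sM'M /matchingP[sMF dM]; apply/matchingP; split.
  exact: subset_trans sMF.
by move=> A B /(subsetP sM'M) AM /(subsetP sM'M) BM; apply: dM.
Qed.

Lemma matching_setU1 F M X : X \in F -> {in M, forall E, [disjoint X & E]} ->
  is_matching F M -> is_matching F (X |: M).
Proof.
move=> XF dX /matchingP[sMF dM]; apply/matchingP; split.
  by rewrite subUset sub1set XF.
move=> A B /setU1P[->|AM] /setU1P[->|BM] neqAB.
- by rewrite eqxx in neqAB.
- exact: dX.
- by rewrite disjoint_sym; apply: dX.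
- exact: dM.
Qed.

Lemma matching_le_nu F M : is_matching F M -> #|M| <= nu F.
Proof. exact: leq_bigmax_cond. Qed.

Lemma nu_attained F : {M | is_matching F M & #|M| = nu F}.
Proof.
have matching0 : is_matching F set0.
  by apply/matchingP; split=> [|A B]; rewrite ?sub0set ?inE.
rewrite /nu; have [|M MF ->] := @eq_bigmax_cond _ (is_matching F) (fun M => #|M|).
  by apply/card_gt0P; exists set0.
by exists M.
Qed.

Lemma star_le_maxdeg F x : #|star F x| <= maxdeg F.
Proof. exact: leq_bigmax. Qed.

End Matchings.

Section MaximumMatching.
Variables (T : finType) (F M : {set {set T}}) (d : nat).
Hypotheses (uniF : uniform3 F) (linF : linear_fam F).
Hypotheses (matchM : is_matching F M)
  (maxM : forall M', is_matching F M' -> #|M'| <= #|M|).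
Hypothesis degF : forall x, #|star F x| <= d.
Implicit Types (A B C E S X : {set T}) (P : {set {set T}}) (x y z : T).

Let V := cover M.

Lemma card_member E : E \in F -> #|E| = 3.
Proof. by move=> EF; move/forallP: uniF => /(_ E); rewrite EF => /eqP. Qed.

Lemma card_meet_le1 E E' : E \in F -> E' \in F -> E != E' -> #|E :&: E'| <= 1.
Proof.
move=> EF E'F neqE; move/forallP: linF => /(_ E); rewrite EF => /forallP/(_ E').
by rewrite E'F neqE.
Qed.

Lemma matching_member A : A \in M -> A \in F.
Proof. by case/matchingP: matchM => sMF _ /(subsetP sMF). Qed.

Lemma matching_sub_cover A : A \in M -> A \subset V.
Proof. exact: bigcup_sup. Qed.

Lemma matching_disjoint A B : A \in M -> B \in M -> A != B -> [disjoint A & B].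
Proof. by case/matchingP: matchM => _; apply. Qed.

Lemma meet_cover_notin_matching E :
  E \in F -> #|E :&: V| < 3 -> E \notin M.
Proof.
move=> EF; apply: contraTN => EM.
by rewrite (setIidPl (matching_sub_cover EM)) card_member.
Qed.

Lemma meet_cover E : E \in F -> 0 < #|E :&: V|.
Proof.
move=> EF; rewrite lt0n cards_eq0; apply/negP => /eqP EV0.
have EnM : E \notin M by apply: meet_cover_notin_matching; rewrite ?EV0 ?cards0.
have : is_matching F (E |: M).
  apply: matching_setU1 => // A AM; rewrite -setI_eq0 -subset0 -EV0.
  exact/setIS/matching_sub_cover.
by move/maxM; rewrite cardsU1 EnM ltnn.
Qed.

Definition private x := [set E in star F x | #|E :&: V| == 1].

Lemma privateP x E : x \in V -> E \in private x ->
  [/\ E \in F, x \in E & E :&: V = [set x]].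
Proof.
move=> xV; rewrite !inE => /andP[/andP[EF xE] /cards1P[z EVz]].
split=> //; have : x \in E :&: V by rewrite inE xE xV.
by rewrite EVz inE => /eqP <-.
Qed.

Lemma private_matching_disjoint A E x X : A \in M -> x \in A ->
  X \in private x -> E \in M -> E != A -> [disjoint X & E].
Proof.
move=> AM xA Xx EM neqEA.
have [_ _ XV] := privateP (subsetP (matching_sub_cover AM) x xA) Xx.
rewrite -setI_eq0 -subset0; apply/subsetP => z /setIP[zX zE].
have : z \in X :&: V by rewrite inE zX (subsetP (matching_sub_cover EM)).
rewrite XV inE => /eqP zx; rewrite zx in zE; rewrite eq_sym in neqEA.
by rewrite (disjointFr (matching_disjoint AM EM neqEA) xA) in zE.
Qed.

Lemma private_pair_meet A x y B C : A \in M -> x \in A -> y \in A -> x != y ->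
  B \in private y -> C \in private x -> ~~ [disjoint B & C].
Proof.
move=> AM xA yA neqxy By Cx; apply/negP => dBC.
have sAV := matching_sub_cover AM.
have [BF yB BV] := privateP (subsetP sAV y yA) By.
have [CF _ CV] := privateP (subsetP sAV x xA) Cx.
have BnM : B \notin M by apply: meet_cover_notin_matching; rewrite ?BV ?cards1.
have CnM : C \notin M by apply: meet_cover_notin_matching; rewrite ?CV ?cards1.
have yC : y \notin C.
  apply: contra neqxy => yC; have : y \in C :&: V by rewrite inE yC (subsetP sAV).
  by rewrite CV inE eq_sym.
have away X z : X \in private z -> z \in A -> {in M :\ A, forall E, [disjoint X & E]}.
  by move=> Xz zA E /setD1P[neqEA EM]; apply: private_matching_disjoint zA Xz EM neqEA.
have matchC : is_matching F (C |: (M :\ A)).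
  apply: matching_setU1 (away _ _ Cx xA) _ => //.
  exact: matching_subset (subD1set M A) matchM.
have matchBC : is_matching F (B |: (C |: (M :\ A))).
  apply: matching_setU1 matchC => // E /setU1P[->|]; first by [].
  exact: away _ _ By yA E.
have BnCM : B \notin C |: (M :\ A).
  rewrite in_setU1 in_setD1 (negbTE BnM) andbF orbF.
  by apply: contraNN yC => /eqP <-.
have CnM' : C \notin M :\ A by rewrite in_setD1 (negbTE CnM) andbF.
move/maxM: matchBC; rewrite cardsU1 BnCM cardsU1 CnM' (cardsD1 A M) AM.
by rewrite !add1n ltnn.
Qed.

Lemma card_star_meet_le x S P : P \subset star F x -> x \notin S ->
  {in P, forall C, C :&: S != set0} -> #|P| <= #|S|.
Proof.
move=> sPx xS meetS.
pose f C := odflt x [pick z in C :&: S].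
have fP C : C \in P -> f C \in C :&: S.
  move=> CP; rewrite /f; case: pickP => [//|none].
  by have /set0Pn[z] := meetS C CP; rewrite none.
have f_inj : {in P &, injective f}.
  move=> C C' CP C'P eqf; apply/eqP; apply: contraT => neqC.
  have /[1!inE]/andP[CF xC] := subsetP sPx C CP.
  have /[1!inE]/andP[C'F xC'] := subsetP sPx C' C'P.
  have /setIP[fC fS] := fP C CP.
  have /setIP[fC' _] := fP C' C'P; rewrite -eqf in fC'.
  have neqxf : x != f C by apply: contraNneq xS => ->.
  suff : 2 <= #|C :&: C'| by rewrite leqNgt ltnS (card_meet_le1 CF C'F neqC).
  have <- : #|[set x; f C]| = 2 by rewrite cards2 neqxf.
  apply/subset_leq_card/subsetP => z /set2P[]->.
  - by rewrite inE xC xC'.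
  - by rewrite inE fC fC'.
rewrite -(card_in_imset f_inj); apply/subset_leq_card/subsetP => z.
by case/imsetP=> C CP ->; case/setIP: (fP C CP).
Qed.

Lemma card_private_le2 A x y : A \in M -> x \in A -> y \in A -> x != y ->
  0 < #|private y| -> #|private x| <= 2.
Proof.
move=> AM xA yA neqxy /card_gt0P[B By].
have sAV := matching_sub_cover AM.
have xV := subsetP sAV x xA.
have [BF yB BV] := privateP (subsetP sAV y yA) By.
have <- : #|B :\ y| = 2.
  by move: (cardsD1 y B); rewrite yB (card_member BF) add1n => -[].
apply: (@card_star_meet_le x).
- by apply/subsetP => C /[1!inE]/andP[].
- apply: contra neqxy => /setD1P[_ xB].
  have : x \in B :&: V by rewrite inE xB xV.
  by rewrite BV inE.
- move=> C Cx; have [_ _ CV] := privateP xV Cx.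
  have := private_pair_meet AM xA yA neqxy By Cx.
  rewrite -setI_eq0 => /set0Pn[z /setIP[zB zC]]; apply/set0Pn; exists z.
  rewrite !inE zC zB andbT; apply: contraNneq neqxy => zy.
  have : z \in C :&: V by rewrite inE zC zy (subsetP sAV).
  by rewrite CV inE eq_sym zy.
Qed.

(* 6 = lcm(1, 2, 3): a member meeting V in k vertices gives 6/k to each. *)
Definition weight E := 6 %/ #|E :&: V|.
Definition load x := \sum_(E in star F x) weight E.

Lemma meet_cover_range E : E \in F -> 0 < #|E :&: V| <= 3.
Proof.
move=> EF; rewrite meet_cover //= -(card_member EF).
exact/subset_leq_card/subsetIl.
Qed.

Lemma sum_load : \sum_(x in V) load x = 6 * #|F|.
Proof.
rewrite /load (exchange_big_dep (fun E => E \in F)) => [|x E _]; last first.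
  by rewrite inE => /andP[].
rewrite mulnC -sum_nat_const; apply: eq_bigr => E EF /=.
have <- : #|E :&: V| * weight E = 6.
  by move: (meet_cover_range EF); rewrite /weight; case: #|E :&: V| => [|[|[|[|k]]]].
rewrite -sum_nat_const; apply: eq_bigl => x.
by rewrite !inE EF andbC.
Qed.

Lemma card_private_sum x :
  #|private x| = \sum_(E in star F x) (E \in private x).
Proof.
rewrite (eq_bigr (fun E => if E \in private x then 1 else 0)) => [|E _]; last first.
  by case: (_ \in _).
rewrite -big_mkcondr -sum1_card; apply: eq_bigl => E.
by rewrite andb_idl // => /[1!inE]/andP[].
Qed.

Lemma load_le A x : A \in M -> x \in A ->
  load x + 1 <= 3 * #|star F x| + 3 * #|private x|.
Proof.
move=> AM xA.
have sumA : \sum_(E in star F x) (E == A) = 1.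
  rewrite (bigD1 A) ?inE ?matching_member //= eqxx big1 // => E /andP[_].
  by move/negbTE->.
rewrite -[X in _ + X <= _]sumA card_private_sum /load mulnC -sum_nat_const.
rewrite big_distrr -!big_split /=.
apply: leq_sum => E /[1!inE]/andP[EF xE].
rewrite !inE EF xE /weight; case: (eqVneq E A) => [->|_].
  by rewrite (setIidPl (matching_sub_cover AM)) card_member ?matching_member.
by move: (meet_cover_range EF); case: #|E :&: V| => [|[|[|[|k]]]].
Qed.

Lemma sum_private_dichotomy A : A \in M ->
  \sum_(x in A) #|private x| <= 6 \/ \sum_(x in A) #|private x| < d.
Proof.
move=> AM; have AF := matching_member AM.
have [small|/forall_inPn[x0 x0A big]] := boolP [forall x in A, #|private x| <= 2].
  left; have -> : 6 = \sum_(x in A) 2 by rewrite sum_nat_const card_member.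
  by apply: leq_sum => x; apply: (forall_inP small).
right; have others y : y \in A -> y != x0 -> #|private y| = 0.
  move=> yA neqy; apply/eqP; rewrite -leqn0 leqNgt; apply: contra big => py.
  by apply: card_private_le2 AM x0A yA _ py; rewrite eq_sym.
rewrite (bigD1 x0) //= big1 => [|y /andP[]]; last exact: others.
rewrite addn0; apply: leq_trans (degF x0); apply: proper_card.
apply/properP; split; first by apply/subsetP => E /[1!inE]/andP[].
exists A; first by rewrite inE AF.
by rewrite inE (setIidPl (matching_sub_cover AM)) card_member // andbF.
Qed.

Lemma sum_load_matching_member A : A \in M ->
  \sum_(x in A) load x <= 6 * maxn (2 * d) 10.
Proof.
move=> AM.
have : \sum_(x in A) (load x + 1) <= 3 * \sum_(x in A) (d + #|private x|).
  rewrite big_distrr /=; apply: leq_sum => x xA; apply: leq_trans (load_le AM xA) _.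
  by rewrite mulnDr leq_add2r leq_mul2l degF orbT.
rewrite [\sum_(x in A) (load x + 1)]big_split [\sum_(x in A) (d + _)]big_split.
rewrite /= !sum_nat_const card_member ?matching_member //.
have := sum_private_dichotomy AM.
(* [set] refolds the sums that [big_split] left in unfolded form, so lia sees atoms. *)
set L := \sum_(x in A) load x; set P := \sum_(x in A) #|private x|; lia.
Qed.

Lemma card_family_le : #|F| <= #|M| * maxn (2 * d) 10.
Proof.
rewrite -(leq_pmul2l (_ : 0 < 6)) // -sum_load /V big_trivIset; last first.
  by apply/trivIsetP => A B AM BM; apply: matching_disjoint.
rewrite mulnCA -sum_nat_const; apply: leq_sum => A AM.
exact: sum_load_matching_member.
Qed.

End MaximumMatching.

Theorem theorem3 (T : finType) (F : {set {set T}}) (d v : nat) :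
  uniform3 F -> linear_fam F -> maxdeg F = d -> nu F = v ->
  #|F| <= maxn (2 * d * v) (10 * v).
Proof.
move=> uniF linF degF nuF.
have [M matchM cardM] := nu_attained F.
have maxM M' : is_matching F M' -> #|M'| <= #|M|.
  by rewrite cardM; apply: matching_le_nu.
have degd x : #|star F x| <= d by rewrite -degF star_le_maxdeg.
have := card_family_le uniF linF matchM maxM degd.
by rewrite cardM nuF maxnMr mulnC [v * 10]mulnC.
Qed.
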